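(* For $m,n\ge2$, \[ \sum_{k=2}^m\sum_{l=2}^n\frac{(-1)^{k+l}G_{k,l}}{m-k+n-l+1}=\frac{1}{m+n-1}-\frac{1}{mn}. \]
   Context: The generalized Gregory coefficients $G_{m,n}$ are defined by $\sum_{m,n\ge0}G_{m,n}x^my^n=\dfrac{y\log^2(1+x)-x\log^2(1+y)}{\log(1+x)-\log(1+y)}$ (formal power series; $\log^ku=(\log u)^k$). *)

(* Bivariate formal power series over rat are represented by
   their coefficient functions nat -> nat -> rat (coefficient of x^i y^j). *)
From mathcomp Require Import all_boot all_order all_algebra.
Set Implicit Arguments. Unset Strict Implicit. Unset Printing Implicit Defensive.
Import Order.TTheory GRing.Theory Num.Theory.
Local Open Scope ring_scope.

(* coefficient of u^k in log(1+u) = sum_{k>=1} (-1)^(k+1) u^k / k *)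
Definition logc (k : nat) : rat :=
  if k is 0%N then 0 else (-1) ^+ k.+1 / k%:R.

(* coefficient of u^k in log^2(1+u) *)
Definition logsq (k : nat) : rat := \sum_(i < k.+1) logc i * logc (k - i).

(* coefficient of x^i y^j in  y log^2(1+x) - x log^2(1+y) *)
Definition gnumer (i j : nat) : rat :=
  (j == 1%N)%:R * logsq i - (i == 1%N)%:R * logsq j.

(* coefficient of x^i y^j in  log(1+x) - log(1+y) *)
Definition gdenom (i j : nat) : rat :=
  (j == 0%N)%:R * logc i - (i == 0%N)%:R * logc j.

(* G is the coefficient family of the quotient series: G(x,y) * denom = numer
   as formal power series (Cauchy product of coefficients). Since Q[[x,y]] is an
   integral domain, this characterizes the generalized Gregory coefficients. *)
Definition is_gen_gregory (G : nat -> nat -> rat) : Prop :=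
  forall i j : nat,
    \sum_(a < i.+1) \sum_(b < j.+1) G a b * gdenom (i - a) (j - b) = gnumer i j.

From mathcomp Require Import all_boot all_order all_algebra.
From mathcomp Require Import ring zify.
Import Order.TTheory GRing.Theory Num.Theory.
Local Open Scope ring_scope.

(* Write L(u) = log(1+u) = sum_k l_k u^k.  Comparing coefficients of x^i y^j in
   G(x,y) (L(x) - L(y)) = y L(x)^2 - x L(y)^2 gives
     sum_a G_(a,j) l_(i-a) - sum_b G_(i,b) l_(j-b) = [x^i y^j] (y L(x)^2 - x L(y)^2).
   Since l_0 = 0 and l_1 = 1, this determines the first two rows and columns:
   G_(a,0) = G_(0,b) = 0 and G_(a,1) = l_a, G_(1,b) = l_b.  For i, j >= 2 the
   right-hand side vanishes, which says that
     T(p,q) = sum_(2 <= a <= p, 2 <= b <= q) G_(a,b) l_(p-a+q-b+1)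
   satisfies T(i-1,j) - T(i,j-1) = l_i l_(j-1) - l_(i-1) l_j.  Induction from
   T(p,1) = 0 gives T(p,q) = l_(p+q-1) - l_p l_q, and as l_k = (-1)^(k+1)/k the sum
   of the theorem is (-1)^(m+n) T(m,n). *)

Arguments logc : simpl never.

Lemma logc0 : logc 0 = 0. Proof. by []. Qed.

Lemma logcS k : logc k.+1 = (-1) ^+ k / k.+1%:R.
Proof. by rewrite /logc !exprS !mulN1r opprK. Qed.

Lemma logc1 : logc 1 = 1.
Proof. by rewrite logcS expr0 divr1. Qed.

Lemma logsq0 : logsq 0 = 0.
Proof. by rewrite /logsq big_ord1 logc0 mul0r. Qed.

Lemma logsq1 : logsq 1 = 0.
Proof. by rewrite /logsq !big_ord_recr big_ord0 /= logc0 mul0r mulr0 !addr0. Qed.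

Lemma logsqE k : logsq k = \sum_(0 <= i < k.+1) logc i * logc (k - i).
Proof. by rewrite /logsq big_mkord. Qed.

Lemma sum_ord_indicator_last (R : pzRingType) (F : nat -> R) j :
  \sum_(b < j.+1) (j - b == 0)%N%:R * F b = F j.
Proof.
rewrite big_ord_recr /= subnn mul1r big1 ?add0r // => b _.
by rewrite subn_eq0 leqNgt ltn_ord mul0r.
Qed.

Lemma big_nat_split01r (V : nmodType) (F : nat -> V) n :
  \sum_(0 <= c < n.+3) F c = F 0%N + F 1%N + \sum_(2 <= c < n.+2) F c + F n.+2.
Proof.
by rewrite big_nat_recr //= (big_ltn (m := 0)) //= (big_ltn (m := 1)) //= !addrA.
Qed.

(* Since log(1+u) = u + O(u^2), convolution with its coefficients is injective. *)
Lemma logc_conv_inj (f g : nat -> rat) :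
  (forall a, \sum_(0 <= c < a.+2) f c * logc (a.+1 - c)
           = \sum_(0 <= c < a.+2) g c * logc (a.+1 - c)) -> f =1 g.
Proof.
move=> fg a; elim: a {-2}a (leqnn a) => [|a IHa] c.
  rewrite leqn0 => /eqP ->.
  have := fg 0%N; rewrite !big_nat_recr ?big_geq //=.
  by rewrite logc0 logc1 !mulr0 !mulr1 !add0r !addr0.
rewrite leq_eqVlt => /orP [/eqP -> | ]; last exact: IHa.
have := fg a.+1; rewrite !(big_nat_recr a.+2) // !(big_nat_recr a.+1) //=.
rewrite subnn subSnn logc0 logc1 !mulr0 !mulr1 !addr0.
rewrite [X in X + _ = _ -> _](eq_big_nat _ _ (F2 := fun c => g c * logc (a.+2 - c))).
  exact: addrI.
by move=> i /andP [_ lt_ia]; rewrite IHa.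
Qed.

Section GregoryCoefficients.
Variable G : nat -> nat -> rat.
Hypothesis HG : is_gen_gregory G.

(* The denominator series log(1+x) - log(1+y) has no mixed monomials. *)
Lemma gregory_coefE i j :
  \sum_(0 <= a < i.+1) G a j * logc (i - a) - \sum_(0 <= b < j.+1) G i b * logc (j - b)
  = gnumer i j.
Proof.
rewrite -HG /gdenom !big_mkord.
have -> : \sum_(a < i.+1) G a j * logc (i - a)
  = \sum_(a < i.+1) \sum_(b < j.+1) (j - b == 0)%N%:R * (G a b * logc (i - a)).
  by apply: eq_bigr => a _; rewrite (sum_ord_indicator_last _ (fun b => G a b * _)).
have -> : \sum_(b < j.+1) G i b * logc (j - b)
  = \sum_(a < i.+1) \sum_(b < j.+1) (i - a == 0)%N%:R * (G a b * logc (j - b)).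
  rewrite exchange_big; apply: eq_bigr => b _.
  by rewrite (sum_ord_indicator_last _ (fun a => G a b * _)).
by rewrite -sumrB; apply: eq_bigr => a _; rewrite -sumrB; apply: eq_bigr => b _; ring.
Qed.

Lemma gregory_n0 a : G a 0 = 0.
Proof.
apply: (logc_conv_inj (fun a => G a 0) (fun _ => 0)) => {}a.
have := gregory_coefE a.+1 0; rewrite big_nat1 subn0 logc0 mulr0 subr0 => ->.
by rewrite /gnumer logsq0 mul0r mulr0 subrr big1 // => c _; rewrite mul0r.
Qed.

Lemma gregory_0n b : G 0 b = 0.
Proof.
apply: (logc_conv_inj (fun b => G 0 b) (fun _ => 0)) => {}b.
have := gregory_coefE 0 b.+1; rewrite big_nat1 subn0 logc0 mulr0 sub0r.
move/eqP; rewrite eqr_oppLR => /eqP ->.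
by rewrite /gnumer logsq0 mul0r mulr0 subrr oppr0 big1 // => c _; rewrite mul0r.
Qed.

Lemma gregory_n1 a : G a 1 = logc a.
Proof.
apply: (logc_conv_inj (fun a => G a 1) logc) => {}a.
have := gregory_coefE a.+1 1.
rewrite [X in _ - X = _]big_nat_recr ?big_nat1 //= gregory_n0.
rewrite subnn logc0 mulr0 mul0r add0r subr0 => ->.
by rewrite /gnumer logsq1 mulr0 subr0 mul1r logsqE.
Qed.

Lemma gregory_1n b : G 1 b = logc b.
Proof.
apply: (logc_conv_inj (fun b => G 1 b) logc) => {}b.
have := gregory_coefE 1 b.+1.
rewrite [X in X - _ = _]big_nat_recr ?big_nat1 //= gregory_0n.
rewrite subnn logc0 mulr0 mul0r add0r => /eqP; rewrite eqr_oppLR => /eqP ->.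
by rewrite /gnumer logsq1 mulr0 sub0r mul1r opprK logsqE.
Qed.

(* The coefficient of x^(i+2) y^(j+2), where the numerator contributes nothing. *)
Lemma gregory_border i j :
  \sum_(2 <= a < i.+2) G a j.+2 * logc (i.+2 - a)
    - \sum_(2 <= b < j.+2) G i.+2 b * logc (j.+2 - b)
  = logc i.+2 * logc j.+1 - logc i.+1 * logc j.+2.
Proof.
have := gregory_coefE i.+2 j.+2.
rewrite /gnumer /= !mul0r subrr !big_nat_split01r !subnn logc0 !mulr0 !addr0.
rewrite gregory_0n gregory_n0 gregory_1n gregory_n1 !mul0r !add0r !subn1 /=.
move: (\sum_(2 <= a < i.+2) _) (\sum_(2 <= b < j.+2) _) => A B.
move/eqP; rewrite subr_eq0 => /eqP AB.
by rewrite -[A](addKr (logc j.+2 * logc i.+1)) AB; ring.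
Qed.

Definition gregory_tail (p q : nat) : rat :=
  \sum_(2 <= a < p.+1) \sum_(2 <= b < q.+1) G a b * logc (p - a + (q - b)).+1.

Lemma gregory_tail_step i j :
  gregory_tail i.+1 j.+2 - gregory_tail i.+2 j.+1
  = logc i.+2 * logc j.+1 - logc i.+1 * logc j.+2.
Proof.
rewrite -gregory_border /gregory_tail [X in _ - X]big_nat_recr //=.
under eq_bigr => a _ do rewrite big_nat_recr //=.
rewrite big_split /=.
have shift (T1 T2 C1 C2 A B : rat) : T1 = T2 -> C1 = A -> C2 = B ->
    T1 + C1 - (T2 + C2) = A - B by move=> -> -> ->; rewrite opprD addrACA subrr add0r.
apply: shift.
- apply: eq_big_nat => a /andP [_ lt_ai]; apply: eq_big_nat => b /andP [_ lt_bj].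
  by congr (_ * logc _); lia.
- by apply: eq_big_nat => a /andP [_ lt_ai]; congr (_ * logc _); lia.
- by apply: eq_big_nat => b /andP [_ lt_bj]; congr (_ * logc _); lia.
Qed.

Lemma gregory_tailE m n :
  gregory_tail m.+1 n.+1 = logc (m + n).+1 - logc m.+1 * logc n.+1.
Proof.
elim: n m => [|n IHn] m.
  by rewrite /gregory_tail big1 ?addn0 ?logc1 ?mulr1 ?subrr // => a _; rewrite big_geq.
by rewrite -[LHS](subrK (gregory_tail m.+2 n.+1)) gregory_tail_step IHn addnS addSn; ring.
Qed.

End GregoryCoefficients.

Lemma sign_div_logcS (g : rat) m n k l : (k <= m)%N -> (l <= n)%N ->
  (-1) ^+ (k + l) * g / (m - k + n - l + 1)%:R
  = (-1) ^+ (m + n) * (g * logc (m - k + (n - l)).+1).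
Proof.
move=> le_km le_ln; rewrite logcS.
have -> : (m - k + n - l + 1 = (m - k + (n - l)).+1)%N by lia.
have -> : (m + n = (m - k + (n - l)) + (k + l))%N by lia.
move: (m - k + (n - l))%N => p; rewrite (exprD _ p).
transitivity ((-1) ^+ p ^+ 2 * ((-1) ^+ (k + l) * g / p.+1%:R)); last by ring.
by rewrite sqrr_sign mul1r.
Qed.

Lemma sign_logc_tailE m n :
  (-1) ^+ (m.+1 + n.+1) * (logc (m + n).+1 - logc m.+1 * logc n.+1)
  = 1 / (m.+1 + n.+1 - 1)%:R - 1 / (m.+1 * n.+1)%:R.
Proof.
have -> : (m.+1 + n.+1 - 1 = (m + n).+1)%N by lia.
rewrite !logcS natrM addSn addnS !exprS !exprD -(signr_odd _ m) -(signr_odd _ n).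
have nat_neq0 k : k.+1%:R != 0 :> rat by rewrite pnatr_eq0.
by case: (odd m); case: (odd n); rewrite /= ?expr0 ?expr1; field;
  rewrite -natrD !nat1r !nat_neq0.
Qed.

Theorem theorem5p6 (G : nat -> nat -> rat) (HG : is_gen_gregory G)
  (m n : nat) (hm : (2 <= m)%N) (hn : (2 <= n)%N) :
  \sum_(2 <= k < m.+1) \sum_(2 <= l < n.+1)
     (-1) ^+ (k + l) * G k l / (m - k + n - l + 1)%:R
  = 1 / (m + n - 1)%:R - 1 / (m * n)%:R.
Proof.
case: m hm => [|m] // _; case: n hn => [|n] // _.
rewrite -sign_logc_tailE -(gregory_tailE _ HG) /gregory_tail mulr_sumr.
apply: eq_big_nat => k /andP [_ le_km]; rewrite mulr_sumr.
by apply: eq_big_nat => l /andP [_ le_ln]; apply: sign_div_logcS.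
Qed.
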